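(* For two nonempty convex sets $A\subseteq B\subseteq\mathbb{R}^d_{\geq 0}$ where $A$ is down-closed, $\operatorname{rdist}(A,B)=\operatorname{LPgapMax}(A,B)$.
   Context: A convex set $C\subseteq\mathbb{R}^d_{\geq0}$ is down-closed if $x\in C$, $y\in\mathbb{R}^d_{\geq0}$, $y\leq x$ imply $y\in C$. $\operatorname{LPgapMax}(A,B)=\inf\{\varepsilon\geq0: (1+\varepsilon)\sup_{a\in A}c^\intercal a\geq\sup_{b\in B}c^\intercal b\ \ \forall c\in\mathbb{R}^d_{\geq0}\}$. For nonempty convex $A\subseteq B\subseteq\mathbb{R}^d$, $\operatorname{rdist}(A,B)=\sup_{\pi}\frac{\sup_{b\in B}\inf_{a\in A}|\pi(b)-\pi(a)|}{\sup_{a,a'\in A}|\pi(a)-\pi(a')|}$ over all linear $\pi:\mathbb{R}^d\to\mathbb{R}$, with fractions having denominator $\infty$ and $0/0$ interpreted as $0$. *)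

From HB Require Import structures.
From mathcomp Require Import all_boot all_order all_algebra.
From mathcomp Require Import all_classical all_reals ereal.
Set Implicit Arguments. Unset Strict Implicit. Unset Printing Implicit Defensive.
Import Order.TTheory GRing.Theory Num.Theory.
Local Open Scope ring_scope.
Local Open Scope classical_set_scope.

Section Defs.
Variables (R : realType) (d : nat).
Local Notation V := 'rV[R]_d.

Definition nonneg_vec (x : V) : Prop := forall i, 0 <= x 0 i.

Definition convex_set (C : set V) : Prop :=
  forall x y (t : R), C x -> C y -> 0 <= t -> t <= 1 ->
    C (t *: x + (1 - t) *: y).

Definition down_closed (C : set V) : Prop :=
  forall x y, C x -> nonneg_vec y -> (forall i, y 0 i <= x 0 i) -> C y.

Definition dotv (c x : V) : R := \sum_(i < d) c 0 i * x 0 i.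

Definition supdot (A : set V) (c : V) : \bar R :=
  ereal_sup [set (dotv c a)%:E | a in A].

Definition LPgapMax (A B : set V) : \bar R :=
  ereal_inf [set eps%:E | eps in [set eps : R | 0 <= eps /\
     forall c, nonneg_vec c -> (supdot B c <= (1 + eps)%:E * supdot A c)%E]].

Definition is_linear_fun (pi : V -> R) : Prop :=
  forall (a : R) (x y : V), pi (a *: x + y) = a * pi x + pi y.

(* fraction N / D with conventions: D = +oo -> 0, 0/0 = 0, N/0 = +oo for N > 0 *)
Definition rfrac (N D : \bar R) : \bar R :=
  if D == +oo%E then 0%E
  else if D == 0%E then (if N == 0%E then 0%E else +oo%E)
  else (N * (fine D)^-1%:E)%E.

Definition rdist_num (A B : set V) (pi : V -> R) : \bar R :=
  ereal_sup [set ereal_inf [set (`|pi b - pi a|)%:E | a in A] | b in B].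

Definition rdist_den (A : set V) (pi : V -> R) : \bar R :=
  ereal_sup [set (`|pi a - pi a'|)%:E | a in A & a' in A].

Definition rdist (A B : set V) : \bar R :=
  ereal_sup [set rfrac (rdist_num A B pi) (rdist_den A pi) | pi in is_linear_fun].

End Defs.

From HB Require Import structures.
From mathcomp Require Import all_boot all_order all_algebra.
From mathcomp Require Import all_classical all_reals ereal.
From mathcomp Require Import lra.
Set Implicit Arguments. Unset Strict Implicit. Unset Printing Implicit Defensive.
Import Order.TTheory GRing.Theory Num.Theory.
Local Open Scope classical_set_scope.
Local Open Scope ring_scope.

(* Every linear functional is [x |-> c.x]. Since [A] is down-closed, zeroing the
   coordinates where [c] is negative and shrinking towards [0] keep points in
   [A], so the projection [c.A] contains [0] and [[0, c^+.a]] for every [a] in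
   [A]. For [c >= 0] the width of [c.A] is therefore [s = sup_A c.a], and the
   rdist quotient at [c] is at least [sup_B (c.b - s) / s], the LP gap at [c].
   Conversely, if [eps] bounds the LP gap, then [0 <= c.b <= c^+.b <=
   (1 + eps) sup_A c^+.a], while [sup_A c^+.a] is at most the width of [c.A] and
   adheres to [c.A]; so [c.b] is within [eps] times that width of [c.A]
   (points with [c.b < 0] are handled by [-c]). *)

Section Dotv.
Variables (R : realType) (d : nat).
Local Notation V := 'rV[R]_d.

Lemma dotvDr (c x y : V) (a : R) : dotv c (a *: x + y) = a * dotv c x + dotv c y.
Proof.
rewrite /dotv big_distrr -big_split /=; apply: eq_bigr => i _.
by rewrite !mxE mulrDr mulrCA.
Qed.

Lemma dotv0r (c : V) : dotv c 0 = 0.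
Proof. by rewrite /dotv big1 // => i _; rewrite mxE mulr0. Qed.

Lemma dotvZr (c x : V) (a : R) : dotv c (a *: x) = a * dotv c x.
Proof. by have := dotvDr c x 0 a; rewrite addr0 dotv0r addr0. Qed.

Lemma dotvNl (c x : V) : dotv (- c) x = - dotv c x.
Proof. by rewrite /dotv -sumrN; apply: eq_bigr => i _; rewrite !mxE mulNr. Qed.

Lemma dotv_ge0 (c x : V) : nonneg_vec c -> nonneg_vec x -> 0 <= dotv c x.
Proof. by move=> c0 x0; apply: sumr_ge0 => i _; apply: mulr_ge0. Qed.

Lemma is_linear_fun_dotv (c : V) : is_linear_fun (dotv c).
Proof. by move=> a x y; apply: dotvDr. Qed.

Lemma is_linear_funP (pi : V -> R) : is_linear_fun pi -> exists c, pi = dotv c.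
Proof.
move=> lin; exists (\row_i pi (delta_mx 0 i)); apply: funext => x.
have pi0 : pi 0 = 0 by have := lin (-1) 0 0; rewrite scaler0 addr0 mulN1r addNr.
have piD u v : pi (u + v) = pi u + pi v by have := lin 1 u v; rewrite scale1r mul1r.
rewrite {1}(matrix_sum_delta x) big_ord1 (big_morph pi piD pi0).
apply: eq_bigr => i _; have := lin (x 0 i) (delta_mx 0 i) 0.
by rewrite addr0 pi0 addr0 mxE mulrC => ->.
Qed.

Definition pos_part (c : V) : V := \row_i Num.max (c 0 i) 0.

Definition pos_mask (c a : V) : V := \row_i (if 0 < c 0 i then a 0 i else 0).

Lemma pos_part_nonneg (c : V) : nonneg_vec (pos_part c).
Proof. by move=> i; rewrite mxE le_max lexx orbT. Qed.

Lemma dotv_pos_mask (c a : V) : dotv c (pos_mask c a) = dotv (pos_part c) a.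
Proof.
apply: eq_bigr => i _; rewrite !mxE.
by case: ltP => c_i; rewrite ?mulr0 ?mul0r.
Qed.

Lemma dotv_le_pos_part (c b : V) : nonneg_vec b -> dotv c b <= dotv (pos_part c) b.
Proof.
move=> b0; apply: ler_sum => i _; rewrite mxE.
by apply: ler_wpM2r => //; rewrite le_max lexx.
Qed.

End Dotv.

Lemma down_closed0 (R : realType) (d : nat) (A : set 'rV[R]_d) (a : 'rV[R]_d) :
  down_closed A -> nonneg_vec a -> A a -> A 0.
Proof. by move=> dcA a0 Aa; apply: (dcA a) => // i; rewrite mxE. Qed.

Lemma rfrac_ge0 (R : realType) (N D : \bar R) :
  (0 <= N)%E -> (0 <= D)%E -> (0 <= rfrac N D)%E.
Proof.
move=> N0 D0; rewrite /rfrac; case: ifP => // _; case: ifP => _; first by case: ifP.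
by apply: mule_ge0 => //; rewrite lee_fin invr_ge0; apply: fine_ge0.
Qed.

Lemma rfrac_le (R : realType) (N : \bar R) (D r : R) :
  (0 <= N)%E -> 0 <= D -> 0 <= r ->
  (rfrac N D%:E <= r%:E)%E = (N <= (r * D)%:E)%E.
Proof.
move=> N0 D0 r0; rewrite /rfrac /=; case: eqP => [[->]|D_neq0].
  rewrite mulr0; case: eqP => [->|/eqP N_neq0]; first by rewrite !lee_fin r0 lexx.
  by rewrite leye_eq; apply/esym/negbTE; rewrite -ltNge lt_def N_neq0.
have D_gt0 : 0 < D by rewrite lt_neqAle D0 andbT; apply/eqP => D_eq0; apply: D_neq0; rewrite -D_eq0.
by rewrite lee_pdivrMr // -EFinM.
Qed.

Section DownClosedProjections.
Variables (R : realType) (d : nat) (A : set 'rV[R]_d).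
Hypotheses (dcA : down_closed A) (nnA : forall x, A x -> nonneg_vec x) (A0 : A 0).
Implicit Types (a c : 'rV[R]_d) (t : R) (pi : 'rV[R]_d -> R).

Lemma down_closed_pos_mask c a : A a -> A (pos_mask c a).
Proof. by move=> Aa; apply: (dcA Aa) => // i; rewrite mxE; case: ifP => // _; apply: nnA. Qed.

Lemma down_closed_scale t a : A a -> 0 <= t <= 1 -> A (t *: a).
Proof.
move=> Aa /andP[t0 t1]; apply: (dcA Aa) => // i; rewrite mxE.
  exact: mulr_ge0 (nnA Aa i).
by rewrite -[leRHS]mul1r; apply: ler_wpM2r => //; apply: nnA.
Qed.

Lemma dotv_down_closed_interval c a t :
  A a -> 0 <= t <= dotv (pos_part c) a -> exists2 a', A a' & dotv c a' = t.
Proof.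
move=> Aa /andP[t0 t_le]; have [v0|v_neq0] := eqVneq (dotv (pos_part c) a) 0.
  by exists 0; rewrite // dotv0r; apply/eqP; rewrite eq_le t0 -v0 t_le.
have v_gt0 : 0 < dotv (pos_part c) a by rewrite lt_neqAle eq_sym v_neq0 (le_trans t0).
exists ((t / dotv (pos_part c) a) *: pos_mask c a).
  apply: down_closed_scale; first exact: down_closed_pos_mask.
  by rewrite divr_ge0 ?(ltW v_gt0) // ler_pdivrMr // mul1r.
by rewrite dotvZr dotv_pos_mask divfK.
Qed.

Lemma supdot_ge0 c : (0 <= supdot A c)%E.
Proof. by apply: le_ereal_sup_tmp; exists 0%:E; first by exists 0; rewrite ?dotv0r. Qed.

Lemma rdist_den_ge0 pi : (0 <= rdist_den A pi)%E.
Proof.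
apply: le_ereal_sup_tmp; exists 0%:E => //.
by exists 0 => //; exists 0 => //; rewrite subrr normr0.
Qed.

Lemma rdist_den_ub pi a a' :
  A a -> A a' -> ((`|pi a - pi a'|)%:E <= rdist_den A pi)%E.
Proof. by move=> Aa Aa'; apply: ereal_sup_ubound; exists a => //; exists a'. Qed.

Lemma rdist_den_oppr pi : rdist_den A (fun x => - pi x) = rdist_den A pi.
Proof.
rewrite /rdist_den; congr ereal_sup; apply/seteqP.
by split=> _ [a Aa [a' Aa' <-]]; exists a => //; exists a' => //; rewrite -opprD normrN.
Qed.

Lemma rdist_den_dotv c : nonneg_vec c -> rdist_den A (dotv c) = supdot A c.
Proof.
move=> c0; apply/le_anti/andP; split.
  apply/ereal_supP => _ [a Aa [a' Aa' <-]].
  have [ca ca'] := (dotv_ge0 c0 (nnA Aa), dotv_ge0 c0 (nnA Aa')).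
  have ub x : A x -> ((dotv c x)%:E <= supdot A c)%E.
    by move=> Ax; apply: ereal_sup_ubound; exists x.
  have [le_aa'|le_a'a] := leP (dotv c a) (dotv c a').
    by apply: le_trans (ub _ Aa'); rewrite lee_fin ler_norml; apply/andP; split; lra.
  by apply: le_trans (ub _ Aa); rewrite lee_fin ler_norml; apply/andP; split; lra.
apply/ereal_supP => _ [a Aa <-]; apply: le_trans (rdist_den_ub _ Aa A0) => //.
by rewrite dotv0r subr0 lee_fin ler_norm.
Qed.

Lemma supdot_pos_part_le c D :
  (rdist_den A (dotv c) <= D%:E)%E -> (supdot A (pos_part c) <= D%:E)%E.
Proof.
move=> denD; apply/ereal_supP => _ [a Aa <-]; rewrite -dotv_pos_mask.
apply: le_trans denD; apply: le_trans (rdist_den_ub _ (down_closed_pos_mask c Aa) A0).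
by rewrite dotv0r subr0 lee_fin ler_norm.
Qed.

End DownClosedProjections.

Section LPGap.
Variables (R : realType) (d : nat) (A B : set 'rV[R]_d).
Hypotheses (dcA : down_closed A) (nnA : forall x, A x -> nonneg_vec x) (A0 : A 0).
Hypothesis nnB : forall x, B x -> nonneg_vec x.
Implicit Types (a b c : 'rV[R]_d) (eps r D : R) (pi : 'rV[R]_d -> R).

Definition lp_gap_le eps :=
  forall c, nonneg_vec c -> (supdot B c <= (1 + eps)%:E * supdot A c)%E.

Lemma rdist_num_ge0 pi b : B b -> (0 <= rdist_num A B pi)%E.
Proof.
move=> Bb; apply: le_ereal_sup_tmp; eexists; first by exists b.
by apply/ereal_infP => _ [a Aa <-]; rewrite lee_fin.
Qed.

Lemma rdist_ge0 b : B b -> (0 <= rdist A B)%E.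
Proof.
move=> Bb; apply: le_ereal_sup_tmp; eexists; first by exists (dotv 0); first exact: is_linear_fun_dotv.
exact: rfrac_ge0 (rdist_num_ge0 _ Bb) (rdist_den_ge0 _ _).
Qed.

Lemma lp_gap_approx c b eps D del :
  lp_gap_le eps -> 0 <= eps -> 0 < del -> B b ->
  (rdist_den A (dotv c) <= D%:E)%E ->
  exists2 a, A a & `|dotv c b - dotv c a| <= eps * D + del.
Proof.
move=> gap eps0 del0 Bb.
wlog cb0 : c / 0 <= dotv c b => [wlog_ge0 denD|denD].
  have [|cb_lt0] := leP 0 (dotv c b); first by move/wlog_ge0; apply.
  have dotv_opp : dotv (- c) = fun x => - dotv c x by apply: funext => x; apply: dotvNl.
  have [||a Aa] := wlog_ge0 (- c); rewrite dotv_opp.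
  - by rewrite oppr_ge0 ltW.
  - by rewrite rdist_den_oppr.
  - by rewrite -opprD normrN; exists a.
(* With [s = sup_A c^+.a]: [c.b <= (1 + eps) s] and [c.A] contains [[0, s - del]]. *)
have D0 : 0 <= D by rewrite -lee_fin (le_trans (rdist_den_ge0 _ _) denD).
have [s Es /andP[s0 sD]] : exists2 s, supdot A (pos_part c) = s%:E & 0 <= s <= D.
  have := supdot_ge0 A0 (pos_part c); have := supdot_pos_part_le dcA nnA A0 denD.
  by case: (supdot A (pos_part c)) => [s||] // sD s0; exists s; rewrite -?lee_fin ?s0.
have cb_le : dotv c b <= (1 + eps) * s.
  apply: le_trans (dotv_le_pos_part c (nnB Bb)) _; rewrite -lee_fin EFinM -Es.
  by apply: le_trans (gap _ (pos_part_nonneg c)); apply: ereal_sup_ubound; exists b.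
have [a Aa v_gt] : exists2 a, A a & s - del < dotv (pos_part c) a.
  have : ((s - del)%:E < supdot A (pos_part c))%E by rewrite Es lte_fin; lra.
  by move=> /ereal_sup_gtP[_ [a Aa <-]]; rewrite lte_fin; exists a.
have epsD : eps * s <= eps * D by apply: ler_wpM2l.
have epsD0 : 0 <= eps * D by apply: mulr_ge0.
have [cb_le_v|v_lt_cb] := leP (dotv c b) (dotv (pos_part c) a).
  have [a' Aa' ca'] : exists2 a', A a' & dotv c a' = dotv c b.
    by apply: (dotv_down_closed_interval dcA nnA A0 Aa); rewrite cb0.
  by exists a'; rewrite // ca' subrr normr0; lra.
exists (pos_mask c a); first exact: down_closed_pos_mask.
by rewrite dotv_pos_mask gtr0_norm ?subr_gt0 //; nra.
Qed.

Lemma rdist_num_le c eps D :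
  lp_gap_le eps -> 0 <= eps -> (rdist_den A (dotv c) <= D%:E)%E ->
  (rdist_num A B (dotv c) <= (eps * D)%:E)%E.
Proof.
move=> gap eps0 denD; apply/ereal_supP => _ [b Bb <-]; apply/lee_addgt0Pr => del del0.
have [a Aa close] := lp_gap_approx gap eps0 del0 Bb denD.
by apply: ge_ereal_inf; exists (`|dotv c b - dotv c a|)%:E; [exists a | rewrite -EFinD lee_fin].
Qed.

Lemma rfrac_dotv_le_gap c eps b :
  B b -> lp_gap_le eps -> 0 <= eps ->
  (rfrac (rdist_num A B (dotv c)) (rdist_den A (dotv c)) <= eps%:E)%E.
Proof.
move=> Bb gap eps0; have := rdist_den_ge0 A0 (dotv c).
case Eden: (rdist_den A (dotv c)) => [D| |] // D0.
rewrite lee_fin in D0; rewrite rfrac_le ?(rdist_num_ge0 _ Bb) //.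
by apply: rdist_num_le; rewrite ?Eden.
Qed.

Lemma gap_le_rfrac_dotv c r b :
  B b -> nonneg_vec c -> 0 <= r ->
  (rfrac (rdist_num A B (dotv c)) (rdist_den A (dotv c)) <= r%:E)%E ->
  (supdot B c <= (1 + r)%:E * supdot A c)%E.
Proof.
move=> Bb c0 r0; rewrite rdist_den_dotv //; have := supdot_ge0 A0 c.
case Es: (supdot A c) => [s| |] // s0; last by rewrite gt0_muley ?leey // lte_fin; lra.
rewrite lee_fin in s0; rewrite rfrac_le ?(rdist_num_ge0 _ Bb) // => numle.
apply/ereal_supP => _ [b' Bb' <-]; rewrite -EFinM lee_fin.
have cb_s : ((dotv c b' - s)%:E <= rdist_num A B (dotv c))%E.
  apply: le_ereal_sup_tmp; eexists; first by exists b'.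
  apply/ereal_infP => _ [a Aa <-]; rewrite lee_fin; apply: le_trans (ler_norm _).
  rewrite lerD2l lerN2 -lee_fin -Es; apply: ereal_sup_ubound; by exists a.
by have := le_trans cb_s numle; rewrite lee_fin; nra.
Qed.

End LPGap.

Theorem mainTheorem5 (R : realType) (d : nat) (A B : set 'rV[R]_d) :
  A !=set0 -> B !=set0 -> convex_set A -> convex_set B ->
  A `<=` B -> (forall x, B x -> nonneg_vec x) -> down_closed A ->
  rdist A B = LPgapMax A B.
Proof.
move=> [a0 Aa0] [b0 Bb0] _ _ AB nnB dcA.
have nnA x : A x -> nonneg_vec x by move/AB; apply: nnB.
have A0 : A 0 := down_closed0 dcA (nnA _ Aa0) Aa0.
apply/le_anti/andP; split.
  apply/ereal_supP => _ [pi /is_linear_funP[c ->] <-].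
  by apply/ereal_infP => _ [eps [eps0 gap] <-]; apply: rfrac_dotv_le_gap Bb0 gap eps0.
have := rdist_ge0 A0 Bb0; case Er: (rdist A B) => [r| |] // r0; last by rewrite leey.
rewrite lee_fin in r0; apply: ereal_inf_lbound; exists r => //; split=> // c c0.
apply: (gap_le_rfrac_dotv nnA A0 Bb0 c0 r0).
by rewrite -Er; apply: ereal_sup_ubound; exists (dotv c) => //; apply: is_linear_fun_dotv.
Qed.
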